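(* Assume $M$ is projective in $\sigma[M]$ and let $X\in\sigma[M]$ with $X=\bigoplus_{\lambda\in\Lambda}X_\lambda$ an internal direct sum of submodules $X_\lambda$. Then for every submodule $N\le M$, $N\cdot X=\bigoplus_{\lambda\in\Lambda}N\cdot X_\lambda$.
   Context: $R$ is a ring with identity, modules are unital left $R$-modules, $M$ is a fixed left $R$-module; $\sigma[M]$ is the full subcategory of $R$-modules isomorphic to submodules of $M$-generated modules. For $N\le M$ and a module $X$, $N\cdot X$ is the intersection of the kernels of all homomorphisms $X\to W$ where $W$ ranges over modules with $f(N)=0$ for all $f\in\mathrm{Hom}_R(M,W)$; for a submodule $X_\lambda$ of $X$, $N\cdot X_\lambda$ is formed regarding $X_\lambda$ as a module. *)

(* left R-modules are [lmodType R], homomorphisms are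
   [{linear U -> V}] (R-linear maps). Submodules are represented as
   predicates closed under the module operations. *)
From HB Require Import structures.
From mathcomp Require Import all_boot all_order all_algebra.
From Stdlib Require List.
Set Implicit Arguments. Unset Strict Implicit. Unset Printing Implicit Defensive.
Import GRing.Theory.
Local Open Scope ring_scope.

Section ModDefs.
Variable R : pzRingType.

Definition is_submod (V : lmodType R) (P : V -> Prop) : Prop :=
  [/\ P 0, (forall x y, P x -> P y -> P (x + y)) &
      (forall (r : R) x, P x -> P (r *: x))].

(* Restriction of a map to a submodule P is R-linear: such maps
   g : V -> W are exactly (extensions of) homomorphisms P -> W,
   where P is regarded as a module. *)
Definition linear_on (V W : lmodType R) (P : V -> Prop) (g : V -> W) : Prop :=
  (forall x y, P x -> P y -> g (x + y) = g x + g y) /\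
  (forall (r : R) x, P x -> g (r *: x) = r *: g x).

Definition annihil_by (M : lmodType R) (N : M -> Prop) (W : lmodType R) : Prop :=
  forall (f : {linear M -> W}) (n : M), N n -> f n = 0.

(* N . X_P  for a submodule P of X (regarded as a module):
   intersection of kernels of all homomorphisms P -> W with W annihilated by N. *)
Definition trace_dot_sub (M : lmodType R) (N : M -> Prop)
    (X : lmodType R) (P : X -> Prop) : X -> Prop :=
  fun x => P x /\
    forall (W : lmodType R), annihil_by N W ->
      forall g : X -> W, linear_on P g -> g x = 0.

(* N . X  for a module X: intersection of kernels of all homomorphisms X -> W *)
Definition trace_dot (M : lmodType R) (N : M -> Prop) (X : lmodType R) : X -> Prop :=
  fun x => forall (W : lmodType R), annihil_by N W ->
      forall g : {linear X -> W}, g x = 0.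

(* Y is M-generated: there is an epimorphism M^(L) -> Y, i.e. a family
   (f_l)_{l in L} of homomorphisms M -> Y such that every y is a finite
   sum  f_{l1}(m1) + ... + f_{lk}(mk). *)
Definition M_generated (M Y : lmodType R) : Prop :=
  exists (L : Type) (f : L -> {linear M -> Y}),
    forall y : Y, exists s : seq (L * M), y = \sum_(p <- s) f p.1 p.2.

Definition in_sigma (M X : lmodType R) : Prop :=
  exists (Y : lmodType R) (i : {linear X -> Y}), M_generated M Y /\ injective i.

Definition projective_in_sigma (M : lmodType R) : Prop :=
  forall (A B : lmodType R) (g : {linear A -> B}) (f : {linear M -> B}),
    in_sigma M A -> in_sigma M B -> (forall b : B, exists a, g a = b) ->
    exists h : {linear M -> A}, forall m, g (h m) = f m.

Definition internal_dsum (X : lmodType R) (L : Type) (P : X -> Prop)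
    (Xs : L -> X -> Prop) : Prop :=
  [/\ forall l, is_submod (Xs l),
      (forall x, P x <-> exists s : seq (L * X),
          (forall p, List.In p s -> Xs p.1 p.2) /\ x = \sum_(p <- s) p.2) &
      (forall l v, Xs l v ->
          forall s : seq (L * X),
            (forall p, List.In p s -> Xs p.1 p.2 /\ p.1 <> l) ->
            v = \sum_(p <- s) p.2 -> v = 0)].

End ModDefs.

From HB Require Import structures.
From mathcomp Require Import all_boot all_order all_algebra.
From Stdlib Require Import ClassicalEpsilon.
From Stdlib Require List.
Set Implicit Arguments. Unset Strict Implicit.
Import GRing.Theory.
Local Open Scope ring_scope.

(* With N.X defined as the intersection of the kernels of all homomorphisms
   into modules annihilated by N, the statement holds for every module X.  The
   argument rests on the canonical projections pi_l : X -> X_l: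
   - pi_l is well defined and R-linear, because decompositions into
     summands are unique (classical choice picks one decomposition);
   - a submodule P of X that is stable under every pi_l decomposes as the
     sum of the pieces P /\ X_l (induction on the length of a decomposition);
   - N.X is such a submodule, since g o pi_l is a homomorphism whenever g is;
   - N.X /\ X_l = N.X_l: homomorphisms on X_l extend to X through pi_l.
   The theorem follows: N.X is spanned by the N.X_l, which are submodules,
   and their independence is inherited from that of the X_l. *)

Definition linear_of {R : pzRingType} {X W : lmodType R} {f : X -> W}
  (Hf : forall (a : R) x y, f (a *: x + y) = a *: f x + f y) :
  {linear X -> W} :=
  HB.pack f (GRing.isLinear.Build R X W *:%R f Hf).

Section Submodules.
Variables (R : pzRingType) (V : lmodType R) (P : V -> Prop).
Hypothesis P_submod : is_submod P.

Lemma submod_sum (T : Type) (s : seq T) (Q : pred T) (F : T -> V) :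
  (forall p, List.In p s -> Q p -> P (F p)) -> P (\sum_(p <- s | Q p) F p).
Proof.
case: P_submod => P0 PD _; elim: s => [|q s IH] Hs; first by rewrite big_nil.
have Ps : P (\sum_(p <- s | Q p) F p) by apply: IH => p hp; apply: Hs; right.
by rewrite big_cons; case: ifP => // Qq; apply: PD => //; apply: Hs; [left|].
Qed.

Lemma submod_opp x : P x -> P (- x).
Proof. by case: P_submod => _ _ PZ Px; rewrite -scaleN1r; apply: PZ. Qed.

End Submodules.

Section TraceDot.
Variables (R : pzRingType) (M X : lmodType R) (N : M -> Prop).

Lemma trace_dot_submod : is_submod (trace_dot N (X:=X)).
Proof.
split=> [W _ g|x y hx hy W hW g|r x hx W hW g]; first exact: linear0.
- by rewrite linearD (hx W hW g) (hy W hW g) addr0.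
- by rewrite linearZ_LR (hx W hW g) scaler0.
Qed.

Lemma trace_dot_sub_submod (P : X -> Prop) :
  is_submod P -> is_submod (trace_dot_sub N P).
Proof.
case=> P0 PD PZ; split.
- split=> // W _ g [gD _]; apply/eqP; rewrite -(subrr (g 0)) eq_sym subr_eq.
  by rewrite -gD ?addr0.
- move=> x y [Px gx] [Py gy]; split; first exact: PD.
  by move=> W hW g hg; rewrite hg.1 // gx // gy // addr0.
- move=> r x [Px gx]; split; first exact: PZ.
  by move=> W hW g hg; rewrite hg.2 // gx // scaler0.
Qed.

End TraceDot.

Lemma In_filter {T : Type} {a : pred T} {s : seq T} {p : T} :
  List.In p (filter a s) -> List.In p s /\ a p.
Proof. by move=> /(List.filter_In a p s). Qed.

Lemma In_cat {T : Type} {s t : seq T} {p : T} :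
  List.In p (s ++ t) -> List.In p s \/ List.In p t.
Proof. exact: List.in_app_or. Qed.

Lemma In_map {T U : Type} {f : T -> U} {s : seq T} {y : U} :
  List.In y (map f s) -> exists2 x, List.In x s & y = f x.
Proof. by case/(List.in_map_iff f s y) => x [<-]; exists x. Qed.

Definition label_eqb {L : Type} (l l' : L) : bool :=
  if excluded_middle_informative (l = l') then true else false.

Lemma label_eqbP {L : Type} (l l' : L) : reflect (l = l') (label_eqb l l').
Proof.
by rewrite /label_eqb; case: excluded_middle_informative => h; constructor.
Qed.

Section Projections.
Variables (R : pzRingType) (X : lmodType R) (L : Type) (Xs : L -> X -> Prop).
Hypothesis Xs_submod : forall l, is_submod (Xs l).
Hypothesis Xs_span : forall x : X, True <-> exists s : seq (L * X),
  (forall p, List.In p s -> Xs p.1 p.2) /\ x = \sum_(p <- s) p.2.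
Hypothesis Xs_indep : forall l v, Xs l v ->
  forall s : seq (L * X),
    (forall p, List.In p s -> Xs p.1 p.2 /\ p.1 <> l) ->
    v = \sum_(p <- s) p.2 -> v = 0.

Definition decomposition (s : seq (L * X)) :=
  forall p, List.In p s -> Xs p.1 p.2.

Definition component (l : L) (s : seq (L * X)) :=
  \sum_(p <- s | label_eqb p.1 l) p.2.

Lemma component_in l s : decomposition s -> Xs l (component l s).
Proof. by move=> hs; apply: submod_sum => // p hp /label_eqbP <-; apply: hs. Qed.

Lemma sum_component l s :
  \sum_(p <- s) p.2 = component l s + \sum_(p <- s | ~~ label_eqb p.1 l) p.2.
Proof. exact: bigID. Qed.

(* Components do not depend on the decomposition: the difference of two
   l-components is a sum of terms from the other summands. *)
Lemma component_unique l s t : decomposition s -> decomposition t ->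
  \sum_(p <- s) p.2 = \sum_(p <- t) p.2 -> component l s = component l t.
Proof.
move=> hs ht e; apply/eqP; rewrite -subr_eq0; apply/eqP.
pose other (u : seq (L * X)) := filter (fun p : L * X => ~~ label_eqb p.1 l) u.
have Xs_diff : Xs l (component l s - component l t).
  case: (Xs_submod l) => _ XsD _; apply: XsD; first exact: component_in.
  by apply: submod_opp; [apply: Xs_submod | apply: component_in].
apply: (@Xs_indep l _ Xs_diff
  (other t ++ map (fun p : L * X => (p.1, - p.2) : L * X) (other s))).
- rewrite /other => p /In_cat [/In_filter [hp /= /label_eqbP ne]|].
    by split => //; apply: ht.
  case/In_map => q /In_filter [hq /= /label_eqbP ne] ->.
  by split => //=; apply: submod_opp; [apply: Xs_submod | apply: hs].
- rewrite big_cat big_map !big_filter sumrN /=.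
  move: e; rewrite (sum_component l s) (sum_component l t) => e.
  rewrite -[component l s](addrK (\sum_(p <- s | ~~ label_eqb p.1 l) p.2)) e.
  by rewrite addrAC [component l t + _]addrC addrK.
Qed.

Definition decompose (x : X) :
    {s : seq (L * X) | decomposition s /\ x = \sum_(p <- s) p.2} :=
  constructive_indefinite_description _ (proj1 (Xs_span x) I).

Definition proj (l : L) (x : X) : X := component l (proj1_sig (decompose x)).

Lemma proj_spec l {x : X} {s : seq (L * X)} :
  decomposition s -> x = \sum_(p <- s) p.2 -> proj l x = component l s.
Proof.
move=> hs ex; rewrite /proj; case: (decompose x) => t [ht et] /=.
by apply: component_unique => //; rewrite -et -ex.
Qed.

Lemma proj_in l x : Xs l (proj l x).
Proof.
by rewrite /proj; case: (decompose x) => t [ht _] /=; apply: component_in.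
Qed.

Lemma proj_id l y : Xs l y -> proj l y = y.
Proof.
move=> hy; rewrite (@proj_spec l y [:: (l, y)]) ?big_seq1 //.
  by rewrite /component big_cons big_nil addr0; case: label_eqbP.
by move=> p [<-|].
Qed.

Lemma proj_linear l (a : R) x y :
  proj l (a *: x + y) = a *: proj l x + proj l y.
Proof.
case: (decompose x) => s [hs es]; case: (decompose y) => t [ht et].
rewrite (proj_spec l hs es) (proj_spec l ht et).
pose s' := map (fun p : L * X => (p.1, a *: p.2) : L * X) s.
have hs't : decomposition (s' ++ t).
  move=> p /In_cat [/In_map [q hq ->]|]; last exact: ht.
  by case: (Xs_submod q.1) => _ _ XsZ; apply: XsZ; apply: hs.
rewrite (proj_spec l hs't); last by rewrite big_cat big_map es et scaler_sumr.
by rewrite /component big_cat big_map scaler_sumr.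
Qed.

Lemma proj_comp_linear {W : lmodType R} {l : L} {g : X -> W} :
  linear_on (Xs l) g -> forall (a : R) x y,
  g (proj l (a *: x + y)) = a *: g (proj l x) + g (proj l y).
Proof.
case=> gD gZ a x y; have [_ _ XsZ] := Xs_submod l.
have [px py] := (proj_in l x, proj_in l y).
by rewrite proj_linear gD ?gZ //; apply: XsZ.
Qed.

Lemma stable_decomposition (P : X -> Prop) :
  is_submod P -> (forall l x, P x -> P (proj l x)) ->
  forall x, P x -> exists s : seq (L * X),
    (forall p, List.In p s -> Xs p.1 p.2 /\ P p.2) /\ x = \sum_(p <- s) p.2.
Proof.
move=> P_submod P_proj x Px; case: (decompose x) => s [hs ex].
elim: {s}(size s) {-2}s (leqnn (size s)) x Px hs ex => [|n IH] [|[l y] t] //=.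
1,2: by move=> _ x _ _ ->; exists [::]; rewrite big_nil.
move=> /[!ltnS] size_t x Px hs ex.
pose t' := filter (fun q : L * X => ~~ label_eqb q.1 l) t.
have rest_eq : x - proj l x = \sum_(q <- t') q.2.
  rewrite (proj_spec l hs ex) ex (sum_component l) addrC addKr big_cons /=.
  by case: label_eqbP => // _; rewrite big_filter.
have rest_in : P (x - proj l x).
  have [_ PD _] := P_submod; apply: PD => //.
  by apply: submod_opp => //; apply: P_proj.
have size_t' : (size t' <= n)%N.
  by rewrite size_filter (leq_trans (count_size _ _)).
have dec_t' : decomposition t'.
  by move=> q /In_filter [hq _]; apply: hs; right.
have [s'' [hs'' e'']] := IH t' size_t' _ rest_in dec_t' rest_eq.
exists ((l, proj l x) :: s''); split.
  by move=> q [<-|/hs'' //]; split; [apply: proj_in | apply: P_proj].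
by rewrite big_cons -e'' addrC subrK.
Qed.

Variables (M : lmodType R) (N : M -> Prop).

Lemma trace_dot_proj l x : trace_dot N x -> trace_dot N (proj l x).
Proof.
move=> hx W hW g.
have hg : linear_on (Xs l) g by split=> *; rewrite ?linearD ?linearZ.
exact: (hx W hW (linear_of (proj_comp_linear hg))).
Qed.

Lemma trace_dot_sub_summand l y :
  trace_dot_sub N (Xs l) y <-> Xs l y /\ trace_dot N y.
Proof.
split=> [[hy gy]|[hy ty]]; split=> // W hW g.
  by apply: gy => //; split=> *; rewrite ?linearD ?linearZ.
move=> hg; rewrite -(proj_id hy).
exact: (ty W hW (linear_of (proj_comp_linear hg))).
Qed.

End Projections.

Unset Implicit Arguments.

Theorem lemma2p29 (R : pzRingType) (M : lmodType R) (X : lmodType R)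
    (L : Type) (Xs : L -> X -> Prop) (N : M -> Prop) :
  projective_in_sigma M ->
  in_sigma M X ->
  internal_dsum (fun _ : X => True) Xs ->
  is_submod N ->
  internal_dsum (@trace_dot R M N X) (fun l => trace_dot_sub N (Xs l)).
Proof.
move=> _ _ [Xs_submod Xs_span Xs_indep] _.
have NX_submod := trace_dot_submod X N.
have summand := trace_dot_sub_summand Xs_submod Xs_span Xs_indep N.
have NX_stable := trace_dot_proj Xs_submod Xs_span Xs_indep (N:=N).
have NX_decomp := stable_decomposition Xs_submod (Xs_span:=Xs_span) Xs_indep
  NX_submod NX_stable.
split.
- by move=> l; apply: trace_dot_sub_submod.
- move=> x; split.
    case/NX_decomp=> s [hs ->]; exists s; split=> // p /hs hp; exact/summand.
  by case=> s [hs ->]; apply: submod_sum => // p /hs /summand [].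
- move=> l v [hv _] s hs; apply: (Xs_indep _ _ hv) => p /hs [[hp _] ne].
  by split.
Qed.
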